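(* Consider the Highest Diversity Contribution (HDC) selection mechanism on \textsc{LOTZ}, using as diversity measure either the hypervolume contribution $\mathrm{HVC}(x,P)$ with reference point $(r_1,r_2)$ satisfying $r_1\le -n^2$ and $r_2\le -n^2$, or the crowding distance contribution $\mathrm{CDC}(x,P)$, applied to a population $P$ containing only search points on the Pareto front. Then the parent chosen by HDC always has either the minimum or the maximum number of ones among all search points in $P$.
   Context: Search space $\{0,1\}^n$; objectives maximised. $\textsc{LOTZ}(x)=(\mathrm{LO}(x),\mathrm{TZ}(x))$, $\mathrm{LO}$ = number of leading ones, $\mathrm{TZ}$ = number of trailing zeros. The Pareto set is $\{1^i0^{n-i}:0\le i\le n\}$; populations consist of points with distinct objective vectors. HDC: select an individual with the highest diversity score, ties broken uniformly at random. HVC: sort $P$ by increasing $f_1$ as $x_1,\dots,x_\mu$, set $f_1(x_0)=r_1$, $f_2(x_{\mu+1})=r_2$, $\mathrm{HVC}(x_i,P)=(f_1(x_i)-f_1(x_{i-1}))(f_2(x_i)-f_2(x_{i+1}))$. CDC: each point starts at 0; for each objective $m$, sort ascending by $f_m$, boundary points get $\infty$, intermediate $P[i]$ gets $+(f_m(P[i+1])-f_m(P[i-1]))/(f_m^{\max}-f_m^{\min})$, with $f_m^{\max},f_m^{\min}$ the max and min values of objective $m$. *)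

From mathcomp Require Import all_boot all_order all_algebra.
Set Implicit Arguments. Unset Strict Implicit. Unset Printing Implicit Defensive.
Import Order.TTheory GRing.Theory Num.Theory.

Notation bits n := (n.-tuple bool).

Definition LO {n} (x : bits n) : nat := find negb x.
Definition TZ {n} (x : bits n) : nat := find id (rev x).
Definition ones {n} (x : bits n) : nat := count id x.

Definition LOTZ {n} (x : bits n) : nat * nat := (LO x, TZ x).

Definition on_front {n} (x : bits n) : Prop :=
  exists i, i <= n /\ val x = nseq i true ++ nseq (n - i) false.

(* P is sorted by increasing f1 = LO as x_1..x_mu; f1(x_0) = r1,
   f2(x_(mu+1)) = r2;
   HVC(x_i,P) = (f1(x_i) - f1(x_(i-1))) * (f2(x_i) - f2(x_(i+1))). *)
Definition HVC {n} (r1 r2 : int) (x : bits n) (P : seq (bits n)) : int :=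
  let s := sort (fun a b => LO a <= LO b)%N P in
  let i := index x s in
  let prev1 : int := if i == 0%N then r1 else Posz (LO (nth x s i.-1)) in
  let next2 : int := if i.+1 == size s then r2 else Posz (TZ (nth x s i.+1)) in
  (Posz (LO x) - prev1) * (Posz (TZ x) - next2).

(* Scores live in rat extended by +infinity: [None] = +infinity. *)
Definition escore := option rat.
Definition eadd (a b : escore) : escore :=
  match a, b with Some a', Some b' => Some (a' + b')%R | _, _ => None end.
Definition ele (a b : escore) : bool :=
  match a, b with
  | _, None => true
  | None, Some _ => false
  | Some a', Some b' => (a' <= b')%R
  end.

Definition fmaxP {n} (f : bits n -> nat) (P : seq (bits n)) : nat :=
  foldr maxn 0%N (map f P).
Definition fminP {n} (f : bits n -> nat) (P : seq (bits n)) : nat :=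
  let l := map f P in foldr minn (head 0%N l) l.

Definition cd_obj {n} (f : bits n -> nat) (x : bits n) (P : seq (bits n))
  : escore :=
  let s := sort (fun a b => f a <= f b)%N P in
  let i := index x s in
  if (i == 0%N) || (i.+1 == size s) then None
  else Some (((f (nth x s i.+1))%:R - (f (nth x s i.-1))%:R)
             / ((fmaxP f P)%:R - (fminP f P)%:R) : rat)%R.

Definition CDC {n} (x : bits n) (P : seq (bits n)) : escore :=
  eadd (eadd (Some (0 : rat)%R) (cd_obj LO x P)) (cd_obj TZ x P).

Definition ones_extreme {n} (P : seq (bits n)) (x : bits n) : Prop :=
  (forall y, y \in P -> (ones x <= ones y)%N) \/
  (forall y, y \in P -> (ones y <= ones x)%N).

(* On the Pareto front LO x = |x|_1 and TZ x = n - |x|_1, so sorting P by LO or by TZ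
   sorts it by the number of ones, and a point at either end of one of these sortings
   has an extreme number of ones.  The first point of the LO-sorting is such a boundary
   point and is never beaten by an interior point: its crowding distance is infinite,
   and its hypervolume contribution is at least (LO - r1) * 1 >= n^2, whereas an
   interior point contributes a product of two positive gaps of total at most n,
   which is less than n^2. *)

From mathcomp Require Import all_boot all_order all_algebra.
From mathcomp Require Import zify.
Import Order.TTheory GRing.Theory Num.Theory.

Set Implicit Arguments.
Unset Strict Implicit.
Unset Printing Implicit Defensive.

Definition sort_by (T : Type) (f : T -> nat) (P : seq T) : seq T :=
  sort (fun a b => f a <= f b) P.

Definition boundary (T : eqType) (f : T -> nat) (P : seq T) (x : T) : bool :=
  (index x (sort_by f P) == 0) || ((index x (sort_by f P)).+1 == size (sort_by f P)).

Section SortBy.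
Variables (T : eqType) (f : T -> nat) (P : seq T).

Lemma mem_sort_by x : (x \in sort_by f P) = (x \in P).
Proof. exact: mem_sort. Qed.

Lemma size_sort_by : size (sort_by f P) = size P.
Proof. exact: size_sort. Qed.

Lemma sorted_map_sort_by : sorted leq (map f (sort_by f P)).
Proof. by rewrite sorted_map; apply: sort_sorted => a b; apply: leq_total. Qed.

Lemma nth_sort_by_le x0 i j : i <= j -> j < size P ->
  f (nth x0 (sort_by f P) i) <= f (nth x0 (sort_by f P) j).
Proof.
move=> le_ij lt_jP; have lt_iP := leq_ltn_trans le_ij lt_jP.
rewrite -!(nth_map x0 0) ?size_sort_by //.
apply: (sorted_leq_nth leq_trans leqnn 0 sorted_map_sort_by) => //;
  by rewrite inE size_map size_sort_by.
Qed.

Lemma boundary_extreme x : x \in P -> boundary f P x ->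
  {in P, forall y, f x <= f y} \/ {in P, forall y, f y <= f x}.
Proof.
rewrite /boundary; set s := sort_by f P => xP x_bd.
have fE z : z \in P -> f z = f (nth x s (index z s)).
  by move=> zP; rewrite nth_index ?mem_sort_by.
have idx_lt z : z \in P -> index z s < size P.
  by move=> zP; rewrite -size_sort_by index_mem mem_sort_by.
case/orP: x_bd => [/eqP x_first | /eqP x_last].
- left=> y yP; rewrite (fE x) // (fE y) // x_first.
  exact: nth_sort_by_le (idx_lt y yP).
- right=> y yP; rewrite (fE x) // (fE y) //.
  apply: nth_sort_by_le; last exact: idx_lt.
  by rewrite -ltnS x_last size_sort_by idx_lt.
Qed.

Lemma mem_nth_sort_by x0 i : i < size P -> nth x0 (sort_by f P) i \in P.
Proof. by move=> lt_iP; rewrite -mem_sort_by mem_nth ?size_sort_by. Qed.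

Lemma index_head_sort_by x0 : 0 < size P ->
  index (nth x0 (sort_by f P) 0) (sort_by f P) = 0.
Proof. by rewrite -size_sort_by; case: (sort_by f P) => //= y s _; rewrite eqxx. Qed.

Lemma head_boundary x0 : 0 < size P -> boundary f P (nth x0 (sort_by f P) 0).
Proof. by move=> P_gt0; rewrite /boundary index_head_sort_by. Qed.

Lemma size_gt2_interior x : x \in P -> ~~ boundary f P x -> 2 < size P.
Proof. by rewrite /boundary -size_sort_by -mem_sort_by -index_mem; lia. Qed.

End SortBy.

Lemma cd_obj_eq_None n (f : bits n -> nat) x P : (cd_obj f x P == None) = boundary f P x.
Proof. by rewrite /cd_obj /boundary -/(sort_by f P); case: ifP. Qed.

Lemma CDC_eq_None n (x : bits n) P :
  (CDC x P == None) = boundary LO P x || boundary TZ P x.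
Proof. by rewrite /CDC -!cd_obj_eq_None; case: (cd_obj LO x P); case: (cd_obj TZ x P). Qed.

Lemma LOTZ_front n (x : bits n) : on_front x -> LOTZ x = (ones x, n - ones x).
Proof.
case=> i [le_in x_eq]; rewrite /LOTZ /LO /TZ /ones x_eq.
rewrite find_cat has_nseq rev_cat !rev_nseq find_cat has_nseq count_cat !count_nseq.
by rewrite /= !size_nseq !find_nseq /= !andbF !mul1n !mul0n !addn0.
Qed.

Lemma LO_front n (x : bits n) : on_front x -> LO x = ones x.
Proof. by move/LOTZ_front/(congr1 fst). Qed.

Lemma TZ_front n (x : bits n) : on_front x -> TZ x = n - ones x.
Proof. by move/LOTZ_front/(congr1 snd). Qed.

Lemma ones_le n (x : bits n) : ones x <= n.
Proof. by rewrite -{2}(size_tuple x) count_size. Qed.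

Lemma LO_add_TZ_front n (x : bits n) : on_front x -> LO x + TZ x = n.
Proof. by move=> x_front; rewrite LO_front // TZ_front //; have := ones_le x; lia. Qed.

Section ParetoFrontPopulation.
Variables (n : nat) (P : seq (bits n)).
Hypothesis P_front : forall x, x \in P -> on_front x.

Lemma boundary_LO_ones_extreme x : x \in P -> boundary LO P x -> ones_extreme P x.
Proof.
move=> xP /(boundary_extreme xP)[LO_min | LO_max]; [left | right] => y yP;
  rewrite -(LO_front (P_front xP)) -(LO_front (P_front yP)).
- exact: LO_min.
- exact: LO_max.
Qed.

Lemma boundary_TZ_ones_extreme x : x \in P -> boundary TZ P x -> ones_extreme P x.
Proof.
have ones_leTZ y z : y \in P -> z \in P -> TZ y <= TZ z -> ones z <= ones y.
  move=> yP zP; rewrite (TZ_front (P_front yP)) (TZ_front (P_front zP)).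
  by have := ones_le z; lia.
move=> xP /(boundary_extreme xP)[TZ_min | TZ_max]; [right | left] => y yP.
- exact: ones_leTZ (TZ_min y yP).
- exact: ones_leTZ (TZ_max y yP).
Qed.

Hypothesis P_uniq : uniq (map LOTZ P).

Lemma uniq_map_LO : uniq (map LO P).
Proof.
have LOTZ_LO : map LOTZ P = map (fun k => (k, n - k)) (map LO P).
  rewrite -map_comp; apply/eq_in_map => y /P_front y_front /=.
  by rewrite LOTZ_front // LO_front.
by move: P_uniq; rewrite LOTZ_LO => /map_uniq.
Qed.

Lemma LO_sort_by_lt x0 i : i.+1 < size P ->
  LO (nth x0 (sort_by LO P) i) < LO (nth x0 (sort_by LO P) i.+1).
Proof.
move=> lt_iP; have lt_iP' := ltnW lt_iP.
have sorted_lt : sorted ltn (map LO (sort_by LO P)).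
  rewrite ltn_sorted_uniq_leq sorted_map_sort_by andbT.
  by rewrite (perm_uniq (perm_map _ (permEl (perm_sort _ _)))) uniq_map_LO.
rewrite -!(nth_map x0 0) ?size_sort_by //.
by apply: (sorted_ltn_nth ltn_trans 0 sorted_lt); rewrite // inE size_map size_sort_by.
Qed.

Lemma HVC_interior_lt r1 r2 (x : bits n) : x \in P -> ~~ boundary LO P x ->
  (HVC r1 r2 x P < Posz (n ^ 2))%R.
Proof.
rewrite /boundary negb_or => xP /andP[k_neq0 k_neq_last].
rewrite /HVC -/(sort_by LO P) (negbTE k_neq0) (negbTE k_neq_last).
set s := sort_by LO P in k_neq0 k_neq_last *; set k := index x s in k_neq0 k_neq_last *.
have k_lt : k < size P by rewrite -(size_sort_by LO) index_mem mem_sort_by.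
have k1_lt : k.+1 < size P.
  by rewrite ltn_neqAle -(size_sort_by LO) k_neq_last -/s -/k size_sort_by.
have nth_k : nth x s k = x by rewrite nth_index ?mem_sort_by.
have k_gt0 : 0 < k by rewrite lt0n.
have prev_lt : LO (nth x s k.-1) < LO x.
  by rewrite -{2}nth_k -{2}(prednK k_gt0) LO_sort_by_lt // prednK.
have next_gt : LO x < LO (nth x s k.+1) by rewrite -{1}nth_k LO_sort_by_lt.
have x_n : LO x + TZ x = n by exact/LO_add_TZ_front/P_front.
have next_n : LO (nth x s k.+1) + TZ (nth x s k.+1) = n.
  exact/LO_add_TZ_front/P_front/mem_nth_sort_by.
(* Both gaps are positive and together span at most [0, n], so each is below n. *)
rewrite !subzn; [| lia | lia]; rewrite -PoszM ltz_nat -mulnn.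
by apply: ltn_mul; lia.
Qed.

Lemma HVC_head_ge r1 r2 (x0 : bits n) : (r1 <= - Posz (n ^ 2))%R -> 1 < size P ->
  (Posz (n ^ 2) <= HVC r1 r2 (nth x0 (sort_by LO P) 0) P)%R.
Proof.
move=> r1_le P_gt1; set s := sort_by LO P; set y := nth x0 s 0.
have y_idx : index y s = 0 by apply/index_head_sort_by/ltnW.
rewrite /HVC -/(sort_by LO P) -/s y_idx /= (set_nth_default x0) ?size_sort_by //.
rewrite (ltn_eqF P_gt1).
have y_lt : LO y < LO (nth x0 s 1) by apply: LO_sort_by_lt.
have y_n : LO y + TZ y = n by exact/LO_add_TZ_front/P_front/mem_nth_sort_by/ltnW.
have next_n : LO (nth x0 s 1) + TZ (nth x0 s 1) = n.
  exact/LO_add_TZ_front/P_front/mem_nth_sort_by.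
rewrite subzn; last by lia.
rewrite -[leLHS]mulr1; apply: ler_pM => //.
- by lia.
- by rewrite lez_nat; lia.
Qed.

End ParetoFrontPopulation.

Theorem lemma9 (n : nat) (r1 r2 : int) (P : seq (n.-tuple bool)) :
  (r1 <= - Posz (n ^ 2))%R -> (r2 <= - Posz (n ^ 2))%R ->
  uniq (map LOTZ P) ->
  (forall x, x \in P -> on_front x) ->
  (* HDC with the hypervolume contribution *)
  (forall x, x \in P ->
     (forall y, y \in P -> (HVC r1 r2 y P <= HVC r1 r2 x P)%R) ->
     ones_extreme P x) /\
  (* HDC with the crowding distance contribution *)
  (forall x, x \in P ->
     (forall y, y \in P -> ele (CDC y P) (CDC x P)) ->
     ones_extreme P x).
Proof.
(* r2 never enters: the first point of the LO-sorting has a real successor. *)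
move=> r1_le _ P_uniq P_front; split=> x xP x_max.
- have [x_bd | x_int] := boolP (boundary LO P x).
    exact: boundary_LO_ones_extreme.
  have P_gt1 := ltnW (size_gt2_interior xP x_int).
  have := x_max _ (mem_nth_sort_by LO x (ltnW P_gt1)).
  move/(le_trans (HVC_head_ge P_front P_uniq r2 x r1_le P_gt1)).
  by rewrite leNgt (HVC_interior_lt P_front P_uniq r1 r2 xP x_int).
- have P_gt0 : 0 < size P by case: (P) xP.
  have := x_max _ (mem_nth_sort_by LO x P_gt0).
  have /eqP -> : CDC (nth x (sort_by LO P) 0) P == None.
    by rewrite CDC_eq_None head_boundary.
  case CDC_x : (CDC x P) => [//|] _.
  move/eqP: CDC_x; rewrite CDC_eq_None => /orP[x_bd | x_bd].
  + exact: boundary_LO_ones_extreme x_bd.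
  + exact: boundary_TZ_ones_extreme x_bd.
Qed.
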